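(* Let $X$ be a metric space, $(M,\rho)$ a complete metric space, and $(G_i)_{i\ge1}$ a sequence of homotopically dense $G_\delta$-subsets of $C(X,M)$. Then $\bigcap_{i\ge1}G_i$ is homotopically dense in $C(X,M)$.
   Context: $C(X,M)$ carries the source limitation topology: the neighborhood base at $f$ consists of the sets $\{g:\rho(g(x),f(x))<\varepsilon(x)\ \forall x\in X\}$, $\varepsilon\colon X\to(0,1]$ continuous. A set $U\subset C(X,M)$ is homotopically dense if for every $g\in C(X,M)$ and every continuous $\varepsilon\colon X\to(0,1]$ there is $g'\in U$ which is $\varepsilon$-homotopic to $g$, meaning there is a homotopy $h\colon X\times[0,1]\to M$ from $g$ to $g'$ with $\operatorname{diam}h(\{x\}\times[0,1])<\varepsilon(x)$ for all $x\in X$. *)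

From Stdlib Require Import Reals.
Open Scope R_scope.

Record MetricSpace := {
  carrier :> Type;
  dist : carrier -> carrier -> R;
  dist_nonneg : forall x y, 0 <= dist x y;
  dist_eq0 : forall x y, dist x y = 0 <-> x = y;
  dist_sym : forall x y, dist x y = dist y x;
  dist_tri : forall x y z, dist x z <= dist x y + dist y z
}.
Arguments dist {m} _ _.

Definition complete (M : MetricSpace) : Prop :=
  forall u : nat -> M,
    (forall e, 0 < e -> exists N, forall n m, (N <= n)%nat -> (N <= m)%nat ->
        dist (u n) (u m) < e) ->
    exists l : M, forall e, 0 < e -> exists N, forall n, (N <= n)%nat ->
        dist (u n) l < e.

Definition continuous {X Y : MetricSpace} (f : X -> Y) : Prop :=
  forall x e, 0 < e -> exists d, 0 < d /\
    forall y, dist x y < d -> dist (f x) (f y) < e.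

Definition continuous_R {X : MetricSpace} (f : X -> R) : Prop :=
  forall x e, 0 < e -> exists d, 0 < d /\
    forall y, dist x y < d -> Rabs (f x - f y) < e.

Definition eps_fun {X : MetricSpace} (eps : X -> R) : Prop :=
  continuous_R eps /\ forall x, 0 < eps x <= 1.

(* Subsets of C(X,M) are represented as predicates on X -> M; only their
   values on continuous maps matter. *)
Definition subset_CXM (X M : MetricSpace) := (X -> M) -> Prop.

(* Open in the source limitation topology on C(X,M). *)
Definition sl_open {X M : MetricSpace} (U : subset_CXM X M) : Prop :=
  forall f, continuous f -> U f ->
    exists eps, eps_fun eps /\
      forall g, continuous g -> (forall x, dist (g x) (f x) < eps x) -> U g.

Definition sl_Gdelta {X M : MetricSpace} (U : subset_CXM X M) : Prop :=
  exists O : nat -> subset_CXM X M,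
    (forall n, sl_open (O n)) /\
    forall f, continuous f -> (U f <-> forall n, O n f).

(* Continuity of a homotopy h : X x [0,1] -> M (X x [0,1] with the product
   topology; h is given curried, only its values on [0,1] matter). *)
Definition homotopy_continuous {X M : MetricSpace} (h : X -> R -> M) : Prop :=
  forall x t, 0 <= t <= 1 -> forall e, 0 < e -> exists d, 0 < d /\
    forall y s, 0 <= s <= 1 -> dist x y < d -> Rabs (t - s) < d ->
      dist (h x t) (h y s) < e.

(* diam h({x} x [0,1]) < r, i.e. the supremum of the distances is < r,
   i.e. some bound strictly below r bounds all distances. *)
Definition diam_fiber_lt {X M : MetricSpace} (h : X -> R -> M) (x : X) (r : R)
  : Prop :=
  exists b, b < r /\ forall t s, 0 <= t <= 1 -> 0 <= s <= 1 ->
    dist (h x t) (h x s) <= b.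

Definition eps_homotopic {X M : MetricSpace} (eps : X -> R) (g g' : X -> M)
  : Prop :=
  exists h : X -> R -> M,
    homotopy_continuous h /\
    (forall x, h x 0 = g x) /\ (forall x, h x 1 = g' x) /\
    forall x, diam_fiber_lt h x (eps x).

Definition homotopically_dense {X M : MetricSpace} (U : subset_CXM X M) : Prop :=
  forall g : X -> M, continuous g ->
    forall eps, eps_fun eps ->
      exists g', continuous g' /\ U g' /\ eps_homotopic eps g g'.

From Stdlib Require Import Reals Lra Lia ClassicalEpsilon Cantor.
Open Scope R_scope.

(* Baire-type argument.  Enumerating the open sets O_(i,n) with G_i = ∩_n O_(i,n)
   as U_0, U_1, ..., each U_k contains the homotopically dense G_i, so it suffices
   to show that a countable intersection of homotopically dense open sets is
   homotopically dense.  Starting from g_0 = g with radius e_0 = ε/8, move g_k by an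
   e_k-homotopy h_k to some g_(k+1) ∈ U_k, and shrink the radius to e_(k+1) <= e_k/2
   so small that the 2e_(k+1)-neighbourhood of g_(k+1) stays inside U_k.  Running h_k
   on the time interval [1 - 2^-k, 1 - 2^-(k+1)] gives homotopies that converge
   uniformly, by completeness of M, to a homotopy H; the end map H(.,1) lies within
   2e_(k+1) of every g_(k+1), hence in every U_k, and every fibre of H has diameter
   at most 4e_0 = ε/2. *)

Definition clamp01 (u : R) : R := Rmax 0 (Rmin 1 u).

Lemma clamp01_in (u : R) : 0 <= clamp01 u <= 1.
Proof. unfold clamp01, Rmax, Rmin; repeat destruct Rle_dec; lra. Qed.

Lemma clamp01_lipschitz (u v : R) : Rabs (clamp01 u - clamp01 v) <= Rabs (u - v).
Proof.
  unfold clamp01, Rmax, Rmin, Rabs; repeat destruct Rle_dec; repeat destruct Rcase_abs; lra.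
Qed.

Lemma clamp01_ge1 (u : R) : 1 <= u -> clamp01 u = 1.
Proof. unfold clamp01, Rmax, Rmin; repeat destruct Rle_dec; lra. Qed.

Lemma clamp01_0 : clamp01 0 = 0.
Proof. unfold clamp01, Rmax, Rmin; repeat destruct Rle_dec; lra. Qed.

Lemma Rmin_lipschitz (a b c d : R) :
  Rabs (Rmin a b - Rmin c d) <= Rmax (Rabs (a - c)) (Rabs (b - d)).
Proof.
  unfold Rmin, Rmax, Rabs; repeat destruct Rle_dec; repeat destruct Rcase_abs; lra.
Qed.

Lemma pow2_pos (n : nat) : 0 < 2 ^ n.
Proof. apply pow_lt; lra. Qed.

Lemma exists_inv_pow2_lt (e : R) : 0 < e -> exists n, / 2 ^ n < e.
Proof.
  intros He.
  destruct (pow_lt_1_zero (/ 2) ltac:(rewrite Rabs_right; lra) e He) as [n Hn].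
  exists n. specialize (Hn n (le_n n)).
  rewrite pow_inv, Rabs_right in Hn; [exact Hn|].
  left; apply Rinv_0_lt_compat, pow2_pos.
Qed.

Lemma dependent_choice {A : Type} (P : A -> Prop) (Q : nat -> A -> A -> Prop) (a0 : A) :
  P a0 -> (forall k a, P a -> exists b, P b /\ Q k a b) ->
  exists a : nat -> A, a O = a0 /\ forall k, P (a k) /\ Q k (a k) (a (S k)).
Proof.
  intros H0 Hstep.
  assert (Hnext : forall ka : nat * A, exists b, P (snd ka) -> P b /\ Q (fst ka) (snd ka) b).
  { intros [k a]. destruct (excluded_middle_informative (P a)) as [Ha|Ha].
    - destruct (Hstep k a Ha) as [b Hb]. exists b. intros _. exact Hb.
    - exists a. intros Ha'. contradiction. }
  destruct (choice _ Hnext) as [next Hnext'].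
  set (a := nat_rect (fun _ => A) a0 (fun k ak => next (k, ak))).
  assert (HP : forall k, P (a k)).
  { induction k as [|k IH]; [exact H0|]. exact (proj1 (Hnext' (k, a k) IH)). }
  exists a. split; [reflexivity|]. intros k. split; [apply HP|].
  exact (proj2 (Hnext' (k, a k) (HP k))).
Qed.

Lemma dist_self {M : MetricSpace} (x : M) : dist x x = 0.
Proof. apply dist_eq0; reflexivity. Qed.

Lemma complete_limit_of_tail_bound (M : MetricSpace) (HM : complete M)
  (u : nat -> M) (c : nat -> R) :
  (forall ep, 0 < ep -> exists N, c N < ep) ->
  (forall n m, (n <= m)%nat -> dist (u m) (u n) <= c n) ->
  exists l, forall n, dist (u n) l <= c n.
Proof.
  intros Hc Hu.
  destruct (HM u) as [l Hl].
  { intros ep Hep. destruct (Hc (ep / 2)) as [N HN]; [lra|].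
    exists N. intros n m Hn Hm.
    pose proof (Hu N n Hn); pose proof (Hu N m Hm).
    pose proof (dist_tri _ (u n) (u N) (u m)).
    pose proof (dist_sym _ (u n) (u N)); pose proof (dist_sym _ (u m) (u N)). lra. }
  exists l. intros n. apply Rle_plus_epsilon. intros ep Hep.
  destruct (Hl ep Hep) as [N HN].
  pose proof (Hu n (Nat.max n N) (Nat.le_max_l n N)).
  pose proof (HN (Nat.max n N) (Nat.le_max_r n N)).
  pose proof (dist_tri _ (u n) (u (Nat.max n N)) l).
  pose proof (dist_sym _ (u n) (u (Nat.max n N))). lra.
Qed.

Lemma continuous_homotopy_slice {X M : MetricSpace} (h : X -> R -> M) (t : R) :
  0 <= t <= 1 -> homotopy_continuous h -> continuous (fun x => h x t).
Proof.
  intros Ht Hh x e He. destruct (Hh x t Ht e He) as [d [Hd Hclose]].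
  exists d. split; [exact Hd|]. intros y Hxy. apply Hclose; [exact Ht|exact Hxy|].
  rewrite Rminus_diag, Rabs_R0. exact Hd.
Qed.

Lemma diam_fiber_lt_of_ball {X M : MetricSpace} (h : X -> R -> M) (x : X) (c : M)
  (r eps : R) :
  2 * r < eps -> (forall t, 0 <= t <= 1 -> dist (h x t) c <= r) -> diam_fiber_lt h x eps.
Proof.
  intros Hr Hball. exists (2 * r). split; [exact Hr|]. intros t u Ht Hu.
  pose proof (Hball t Ht); pose proof (Hball u Hu).
  pose proof (dist_tri _ (h x t) c (h x u)). pose proof (dist_sym _ c (h x u)). lra.
Qed.

Lemma homotopy_continuous_glue {X M : MetricSpace} (A B : X -> R -> M) (a : R) :
  homotopy_continuous A -> homotopy_continuous B -> (forall x, A x a = B x a) ->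
  homotopy_continuous (fun x t => if Rle_dec t a then A x t else B x t).
Proof.
  intros HA HB Hab x t Ht e He.
  destruct (Rtotal_order t a) as [lt|[eq|gt]].
  - destruct (HA x t Ht e He) as [d [Hd Hclose]].
    exists (Rmin d (a - t)); split; [apply Rmin_pos; lra|].
    intros y s Hs Hxy Hts.
    pose proof (Rmin_l d (a - t)); pose proof (Rmin_r d (a - t)).
    destruct (Rle_dec t a); [|lra].
    destruct (Rle_dec s a).
    + apply Hclose; auto; lra.
    + exfalso. unfold Rabs in Hts; destruct Rcase_abs in Hts; lra.
  - subst t. destruct (HA x a Ht e He) as [d1 [Hd1 Hclose1]].
    destruct (HB x a Ht e He) as [d2 [Hd2 Hclose2]].
    exists (Rmin d1 d2); split; [apply Rmin_pos; lra|].
    intros y s Hs Hxy Hts.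
    pose proof (Rmin_l d1 d2); pose proof (Rmin_r d1 d2).
    destruct (Rle_dec a a); [|lra].
    destruct (Rle_dec s a).
    + apply Hclose1; auto; lra.
    + rewrite Hab. apply Hclose2; auto; lra.
  - destruct (HB x t Ht e He) as [d [Hd Hclose]].
    exists (Rmin d (t - a)); split; [apply Rmin_pos; lra|].
    intros y s Hs Hxy Hts.
    pose proof (Rmin_l d (t - a)); pose proof (Rmin_r d (t - a)).
    destruct (Rle_dec t a); [lra|].
    destruct (Rle_dec s a).
    + exfalso. unfold Rabs in Hts; destruct Rcase_abs in Hts; lra.
    + apply Hclose; auto; lra.
Qed.

Lemma homotopy_continuous_reparam {X M : MetricSpace} (h : X -> R -> M) (a c : R) :
  homotopy_continuous h -> 0 < c ->
  homotopy_continuous (fun x t => h x (clamp01 ((t - a) * c))).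
Proof.
  intros Hh Hc x t Ht e He.
  destruct (Hh x (clamp01 ((t - a) * c)) (clamp01_in _) e He) as [d [Hd Hclose]].
  assert (Hdc : 0 < d / c) by (apply Rdiv_lt_0_compat; lra).
  exists (Rmin d (d / c)); split; [apply Rmin_pos; lra|].
  intros y s Hs Hxy Hts.
  pose proof (Rmin_l d (d / c)); pose proof (Rmin_r d (d / c)).
  apply Hclose; [apply clamp01_in | lra |].
  eapply Rle_lt_trans; [apply clamp01_lipschitz|].
  replace ((t - a) * c - (s - a) * c) with ((t - s) * c) by ring.
  rewrite Rabs_mult, (Rabs_right c) by lra.
  assert (Hts' : Rabs (t - s) < d / c) by lra.
  apply (Rmult_lt_compat_r c) in Hts'; [|lra].
  replace (d / c * c) with d in Hts' by (field; lra). exact Hts'.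
Qed.

Lemma homotopy_continuous_uniform_limit {X M : MetricSpace}
  (F : nat -> X -> R -> M) (L : X -> R -> M) :
  (forall n, homotopy_continuous (F n)) ->
  (forall ep, 0 < ep -> exists n, forall x t, 0 <= t <= 1 -> dist (F n x t) (L x t) < ep) ->
  homotopy_continuous L.
Proof.
  intros HF HL x t Ht ep Hep.
  destruct (HL (ep / 3)) as [n Hn]; [lra|].
  destruct (HF n x t Ht (ep / 3)) as [d [Hd Hclose]]; [lra|].
  exists d; split; [exact Hd|]. intros y s Hs Hxy Hts.
  pose proof (Hn x t Ht); pose proof (Hn y s Hs); pose proof (Hclose y s Hs Hxy Hts).
  pose proof (dist_tri _ (L x t) (F n x t) (L y s)).
  pose proof (dist_tri _ (F n x t) (F n y s) (L y s)).
  pose proof (dist_sym _ (L x t) (F n x t)). lra.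
Qed.

Definition dyadic_time (n : nat) : R := 1 - / 2 ^ n.

Lemma dyadic_time_S (n : nat) : dyadic_time (S n) - dyadic_time n = / 2 ^ S n.
Proof. unfold dyadic_time. pose proof (pow2_pos n). simpl. field. lra. Qed.

Lemma dyadic_time_lt_S (n : nat) : dyadic_time n < dyadic_time (S n).
Proof.
  pose proof (dyadic_time_S n). pose proof (Rinv_0_lt_compat _ (pow2_pos (S n))). lra.
Qed.

Lemma dyadic_time_le (n m : nat) : (n <= m)%nat -> dyadic_time n <= dyadic_time m.
Proof.
  intros Hnm. unfold dyadic_time.
  assert (2 ^ n <= 2 ^ m) by (apply Rle_pow; [lra|exact Hnm]).
  assert (/ 2 ^ m <= / 2 ^ n) by (apply Rinv_le_contravar; [apply pow2_pos|exact H]).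
  lra.
Qed.

Lemma dyadic_time_lt1 (n : nat) : dyadic_time n < 1.
Proof. unfold dyadic_time. pose proof (Rinv_0_lt_compat _ (pow2_pos n)). lra. Qed.

Section HomotopyChain.

Context {X M : MetricSpace}.
Variable h : nat -> X -> R -> M.
Hypothesis h_cont : forall k, homotopy_continuous (h k).
Hypothesis h_link : forall k x, h k x 1 = h (S k) x 0.

Fixpoint chain (n : nat) : X -> R -> M :=
  match n with
  | O => fun x _ => h O x 0
  | S k => fun x t => if Rle_dec t (dyadic_time k) then chain k x t
                      else h k x (clamp01 ((t - dyadic_time k) * 2 ^ S k))
  end.

Lemma chain_after (n : nat) (x : X) (t : R) :
  dyadic_time n <= t -> chain n x t = h n x 0.
Proof.
  induction n as [|n IH]; intros Ht; cbn [chain]; [reflexivity|].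
  pose proof (dyadic_time_lt_S n).
  destruct (Rle_dec t (dyadic_time n)); [lra|].
  rewrite clamp01_ge1; [apply h_link|].
  rewrite <- (Rinv_l (2 ^ S n)) by (apply Rgt_not_eq, pow2_pos).
  rewrite <- dyadic_time_S. apply Rmult_le_compat_r; [left; apply pow2_pos | lra].
Qed.

Lemma chain_before (n m : nat) (x : X) (t : R) :
  (n <= m)%nat -> t <= dyadic_time n -> chain m x t = chain n x t.
Proof.
  intros Hnm Ht. induction Hnm as [|m Hnm IH]; [reflexivity|].
  cbn [chain]. destruct (Rle_dec t (dyadic_time m)); [exact IH|].
  pose proof (dyadic_time_le n m Hnm). lra.
Qed.

Lemma chain_continuous (n : nat) : homotopy_continuous (chain n).
Proof.
  induction n as [|n IH].
  - intros x t Ht e He. destruct (h_cont O x 0 ltac:(lra) e He) as [d [Hd Hclose]].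
    exists d; split; [exact Hd|]. intros y s _ Hxy _. apply Hclose; [lra|exact Hxy|].
    rewrite Rminus_0_r, Rabs_R0. exact Hd.
  - apply homotopy_continuous_glue; [exact IH| |].
    + apply homotopy_continuous_reparam; [apply h_cont | apply pow2_pos].
    + intros x. rewrite chain_after by lra.
      rewrite Rminus_diag, Rmult_0_l, clamp01_0. reflexivity.
Qed.

Variable e : nat -> X -> R.
Hypothesis h_fiber : forall k x t s, 0 <= t <= 1 -> 0 <= s <= 1 ->
  dist (h k x t) (h k x s) <= e k x.
Hypothesis e_nonneg : forall k x, 0 <= e k x.
Hypothesis e_half : forall k x, e (S k) x <= e k x / 2.
Hypothesis e_le1 : forall x, e O x <= 1.

Lemma e_le_inv_pow2 (n : nat) (x : X) : e n x <= / 2 ^ n.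
Proof.
  induction n as [|n IH]; simpl; [rewrite Rinv_1; apply e_le1|].
  pose proof (e_half n x). rewrite Rinv_mult. lra.
Qed.

(* The subtracted [2 * e m x] is what makes the induction on [m] go through. *)
Lemma chain_dist_rest (n m : nat) (x : X) (t : R) :
  (n <= m)%nat -> dyadic_time n <= t <= 1 ->
  dist (chain m x t) (h n x 0) <= 2 * e n x - 2 * e m x.
Proof.
  intros Hnm. revert t. induction Hnm as [|m Hnm IH]; intros t Ht.
  - rewrite chain_after by lra. rewrite dist_self. lra.
  - cbn [chain]. pose proof (e_half m x). pose proof (e_nonneg (S m) x).
    destruct (Rle_dec t (dyadic_time m)); [pose proof (IH t Ht); lra|].
    pose proof (IH 1 ltac:(pose proof (dyadic_time_lt1 m); lra)) as Hrest.
    rewrite chain_after in Hrest by (pose proof (dyadic_time_lt1 m); lra).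
    pose proof (h_fiber m x (clamp01 ((t - dyadic_time m) * 2 ^ S m)) 0 (clamp01_in _)
                  ltac:(lra)).
    pose proof (dist_tri _ (h m x (clamp01 ((t - dyadic_time m) * 2 ^ S m)))
                  (h m x 0) (h n x 0)).
    lra.
Qed.

Lemma chain_cauchy (n m : nat) (x : X) (t : R) :
  (n <= m)%nat -> 0 <= t <= 1 -> dist (chain m x t) (chain n x t) <= 2 * e n x.
Proof.
  intros Hnm Ht. pose proof (e_nonneg n x); pose proof (e_nonneg m x).
  destruct (Rle_dec t (dyadic_time n)).
  - rewrite (chain_before n m) by assumption. rewrite dist_self. lra.
  - rewrite (chain_after n) by lra.
    pose proof (chain_dist_rest n m x t Hnm ltac:(lra)). lra.
Qed.

Theorem homotopy_chain_limit (HM : complete M) :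
  exists H : X -> R -> M,
    homotopy_continuous H /\ (forall x, H x 0 = h O x 0) /\
    (forall x t, 0 <= t <= 1 -> dist (H x t) (h O x 0) <= 2 * e O x) /\
    (forall n x, dist (H x 1) (h n x 0) <= 2 * e n x).
Proof.
  assert (Hsmall : forall ep x, 0 < ep -> exists n, 2 * e n x < ep).
  { intros ep x Hep. destruct (exists_inv_pow2_lt (ep / 2)) as [n Hn]; [lra|].
    exists n. pose proof (e_le_inv_pow2 n x). lra. }
  assert (Hlim : forall p : X * R, exists l : M, 0 <= snd p <= 1 ->
            forall n, dist (chain n (fst p) (snd p)) l <= 2 * e n (fst p)).
  { intros [x t]. destruct (excluded_middle_informative (0 <= t <= 1)) as [Ht|Ht].
    - destruct (complete_limit_of_tail_bound M HM (fun n => chain n x t)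
                  (fun n => 2 * e n x)) as [l Hl].
      + intros ep Hep. exact (Hsmall ep x Hep).
      + intros n m Hnm. exact (chain_cauchy n m x t Hnm Ht).
      + exists l. intros _. exact Hl.
    - exists (h O x 0). intros Ht'. contradiction. }
  destruct (choice _ Hlim) as [L HL].
  assert (Hbound : forall n x t, 0 <= t <= 1 -> dist (chain n x t) (L (x, t)) <= 2 * e n x)
    by (intros n x t Ht; exact (HL (x, t) Ht n)).
  exists (fun x t => L (x, t)). split; [|split; [|split]].
  - apply (homotopy_continuous_uniform_limit chain); [exact chain_continuous|].
    intros ep Hep. destruct (exists_inv_pow2_lt (ep / 2)) as [n Hn]; [lra|].
    exists n. intros x t Ht.
    pose proof (Hbound n x t Ht); pose proof (e_le_inv_pow2 n x). lra.
  - intros x. apply dist_eq0, Rle_antisym; [|apply dist_nonneg].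
    apply Rle_plus_epsilon. intros ep Hep. destruct (Hsmall ep x Hep) as [n Hn].
    pose proof (Hbound n x 0 ltac:(lra)) as Hn0.
    rewrite (chain_before O n) in Hn0; [|lia | unfold dyadic_time; simpl; lra].
    rewrite dist_sym. cbn [chain] in Hn0. lra.
  - intros x t Ht. rewrite dist_sym. exact (Hbound O x t Ht).
  - intros n x. rewrite dist_sym, <- (chain_after n x 1) by (pose proof (dyadic_time_lt1 n); lra).
    apply Hbound. lra.
Qed.

End HomotopyChain.

Lemma eps_fun_scale {X : MetricSpace} (eps : X -> R) (c : R) :
  0 < c <= 1 -> eps_fun eps -> eps_fun (fun x => c * eps x).
Proof.
  intros Hc [Hcont Hrange]. split.
  - intros x e He. destruct (Hcont x (e / c)) as [d [Hd Hclose]].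
    { apply Rdiv_lt_0_compat; lra. }
    exists d. split; [exact Hd|]. intros y Hxy.
    rewrite <- Rmult_minus_distr_l, Rabs_mult, (Rabs_right c) by lra.
    pose proof (Hclose y Hxy) as Hy.
    apply (Rmult_lt_compat_l c) in Hy; [|lra].
    replace (c * (e / c)) with e in Hy by (field; lra). exact Hy.
  - intros x. specialize (Hrange x). split; [apply Rmult_lt_0_compat|]; nra.
Qed.

Lemma eps_fun_min {X : MetricSpace} (a b : X -> R) :
  eps_fun a -> eps_fun b -> eps_fun (fun x => Rmin (a x) (b x)).
Proof.
  intros [Ca Pa] [Cb Pb]. split.
  - intros x e He. destruct (Ca x e He) as [d1 [Hd1 Hclose1]].
    destruct (Cb x e He) as [d2 [Hd2 Hclose2]].
    exists (Rmin d1 d2). split; [apply Rmin_pos; lra|].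
    intros y Hxy. pose proof (Rmin_l d1 d2); pose proof (Rmin_r d1 d2).
    eapply Rle_lt_trans; [apply Rmin_lipschitz|].
    pose proof (Hclose1 y ltac:(lra)); pose proof (Hclose2 y ltac:(lra)).
    unfold Rmax; destruct Rle_dec; lra.
  - intros x. specialize (Pa x); specialize (Pb x). unfold Rmin; destruct Rle_dec; lra.
Qed.

Lemma homotopically_dense_mono {X M : MetricSpace} (U V : subset_CXM X M) :
  (forall f, continuous f -> U f -> V f) ->
  homotopically_dense U -> homotopically_dense V.
Proof.
  intros HUV HU g Hg eps Heps.
  destruct (HU g Hg eps Heps) as [g' [Hg' [HUg' Hhom]]].
  exists g'. split; [exact Hg'|]. split; [exact (HUV g' Hg' HUg')|exact Hhom].
Qed.

Record stage (X M : MetricSpace) := Stage {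
  link : X -> R -> M;
  approx : X -> M;
  radius : X -> R }.
Arguments Stage {X M}.
Arguments link {X M}.
Arguments approx {X M}.
Arguments radius {X M}.

Definition admissible {X M : MetricSpace} (s : stage X M) : Prop :=
  continuous (approx s) /\ eps_fun (radius s).

Record refines {X M : MetricSpace} (U : subset_CXM X M) (s s' : stage X M) : Prop :=
  Refines {
    link_continuous : homotopy_continuous (link s');
    link_start : forall x, link s' x 0 = approx s x;
    link_end : forall x, link s' x 1 = approx s' x;
    link_fiber : forall x t u, 0 <= t <= 1 -> 0 <= u <= 1 ->
      dist (link s' x t) (link s' x u) <= radius s x;
    radius_half : forall x, radius s' x <= radius s x / 2;
    approx_ball_sub : forall f, continuous f ->
      (forall x, dist (f x) (approx s' x) <= 2 * radius s' x) -> U f }.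
Arguments link_continuous {X M U s s'}.
Arguments link_start {X M U s s'}.
Arguments link_end {X M U s s'}.
Arguments link_fiber {X M U s s'}.
Arguments radius_half {X M U s s'}.
Arguments approx_ball_sub {X M U s s'}.

Lemma refines_exists {X M : MetricSpace} (U : subset_CXM X M) :
  sl_open U -> homotopically_dense U ->
  forall s, admissible s -> exists s', admissible s' /\ refines U s s'.
Proof.
  intros HUo HUd [hom0 g r] [Hg Hr]; cbn in *.
  destruct (HUd g Hg r Hr) as [g' [Hg' [HUg' [hom [Hc [H0 [H1 Hdiam]]]]]]].
  destruct (HUo g' Hg' HUg') as [del [Hdel Hnbhd]].
  exists (Stage hom g' (fun x => Rmin (/ 2 * r x) (/ 4 * del x))).
  split; [split; [exact Hg'|]|].
  { apply eps_fun_min; apply eps_fun_scale; auto; lra. }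
  constructor; cbn; [exact Hc | exact H0 | exact H1 | | |].
  - intros x t u Ht Hu. destruct (Hdiam x) as [b [Hb Hbound]].
    pose proof (Hbound t u Ht Hu). lra.
  - intros x. pose proof (Rmin_l (/ 2 * r x) (/ 4 * del x)). lra.
  - intros f Hf Hclose. apply Hnbhd; [exact Hf|]. intros x.
    pose proof (Hclose x); pose proof (Rmin_r (/ 2 * r x) (/ 4 * del x)).
    pose proof (proj2 Hdel x). lra.
Qed.

Theorem homotopically_dense_open_inter {X M : MetricSpace} (HM : complete M)
  (U : nat -> subset_CXM X M) :
  (forall k, sl_open (U k)) -> (forall k, homotopically_dense (U k)) ->
  homotopically_dense (fun f => forall k, U k f).
Proof.
  intros HUo HUd g Hg eps Heps.
  destruct (dependent_choice admissible (fun k => refines (U k))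
              (Stage (fun x _ => g x) g (fun x => / 8 * eps x))) as [s [Hs0 Hs]].
  { split; [exact Hg | apply eps_fun_scale; [lra | exact Heps]]. }
  { intros k. apply refines_exists; [apply HUo | apply HUd]. }
  assert (Hst : forall k, admissible (s k)) by (intros k; apply Hs).
  assert (Href : forall k, refines (U k) (s k) (s (S k))) by (intros k; apply Hs).
  destruct (homotopy_chain_limit (fun k => link (s (S k))) (fun k => link_continuous (Href k)))
    with (e := fun k => radius (s k)) as [H [HHc [HH0 [Hfiber Hend]]]].
  - intros k x. rewrite (link_end (Href k)), (link_start (Href (S k))). reflexivity.
  - exact (fun k => link_fiber (Href k)).
  - intros k x. destruct (Hst k) as [_ [_ Hr]]. pose proof (Hr x). lra.
  - exact (fun k => radius_half (Href k)).
  - intros x. rewrite Hs0. destruct Heps as [_ Hr]. cbn. pose proof (Hr x). lra.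
  - exact HM.
  - exists (fun x => H x 1). split; [apply continuous_homotopy_slice; [lra | exact HHc]|].
    split.
    + intros k. apply (approx_ball_sub (Href k)).
      { apply continuous_homotopy_slice; [lra | exact HHc]. }
      intros x. rewrite <- (link_start (Href (S k))). apply Hend.
    + exists H. split; [exact HHc|]. split; [|split; [reflexivity|]].
      * intros x. rewrite HH0, (link_start (Href O)), Hs0. reflexivity.
      * intros x.
        apply (diam_fiber_lt_of_ball H x (link (s 1%nat) x 0) (2 * radius (s O) x));
          [|apply Hfiber].
        rewrite Hs0. cbn. destruct Heps as [_ Hr]. pose proof (Hr x). lra.
Qed.

Theorem corollary2p6 (X M : MetricSpace) (HM : complete M)
  (G : nat -> subset_CXM X M)
  (HGsub : forall i f, G i f -> continuous f)
  (HGd : forall i, sl_Gdelta (G i))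
  (HGh : forall i, homotopically_dense (G i)) :
  homotopically_dense (fun f => forall i, G i f).
Proof.
  destruct (choice _ HGd) as [O HO].
  set (U := fun k => O (fst (of_nat k)) (snd (of_nat k))).
  apply (homotopically_dense_mono (fun f => forall k, U k f)).
  - intros f Hf HUf i. apply (proj2 (HO i) f Hf). intros n.
    specialize (HUf (to_nat (i, n))). unfold U in HUf. rewrite cancel_of_to in HUf.
    exact HUf.
  - apply homotopically_dense_open_inter; [exact HM | |].
    + intros k. apply (proj1 (HO _)).
    + intros k. apply (homotopically_dense_mono (G (fst (of_nat k)))); [|apply HGh].
      intros f Hf HGf. exact (proj1 (proj2 (HO _) f Hf) HGf _).
Qed.
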